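(* Suppose Assumptions 1–6 hold and Condition M1 holds, i.e. $\lim_{n\to\infty}M_n/m_n^{**}=0$. Then $\Delta_n=o\{R_n(m_n^* )\}$, i.e. $R_n(\mathbf w_n^* )/R_n(m_n^* )\to1$.
   Context: Setting. For each sample size $n$ one observes $\mathbf y=\boldsymbol\mu+\boldsymbol\varepsilon\in\mathbb R^n$ with $\boldsymbol\mu=\mathbf X\boldsymbol\beta$, where $\mathbf X=(x_{ij})$ is a nonstochastic $n\times p_n$ matrix with $p_n<n$, $E(\boldsymbol\varepsilon)=\mathbf 0$, $\mathrm{Cov}(\boldsymbol\varepsilon)=\boldsymbol\Omega$ positive definite (all may depend on $n$). Fix integers $0=\nu_0<\nu_1<\cdots<\nu_{q_n}=p_n$. For $m=1,\dots,q_n$, $\mathbf X_m$ is the $n\times\nu_m$ matrix of the first $\nu_m$ columns of $\mathbf X$ (full column rank), $\mathbf P_m=\mathbf X_m(\mathbf X_m^\top\mathbf X_m)^{-1}\mathbf X_m^\top$, $\mathbf P_0=\mathbf 0$. Candidate models are $m\in\{1,\dots,M_n\}$, $2\le M_n\le q_n$. $R_n(m)=E\|\mathbf P_m\mathbf y-\boldsymbol\mu\|^2$; for $\mathbf w\in\mathbb R^{M_n}$, $R_n(\mathbf w)=E\|\sum_{m=1}^{M_n}w_m\mathbf P_m\mathbf y-\boldsymbol\mu\|^2$. $\mathcal W_n=\{\mathbf w\in[0,1]^{M_n}:\sum_m w_m=1\}$. $m_n^*$ minimizes $R_n(m)$ over $\{1,\dots,M_n\}$, $m_n^{**}$ over $\{1,\dots,q_n\}$,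 $\mathbf w_n^*$ minimizes $R_n(\mathbf w)$ over $\mathcal W_n$ (all unique); $\Delta_n=R_n(m_n^* )-R_n(\mathbf w_n^* )$. $\theta_{n,m}=\dfrac{n^{-1}\boldsymbol\mu^\top(\mathbf P_m-\mathbf P_{m-1})\boldsymbol\mu}{\mathrm{tr}\{(\mathbf P_m-\mathbf P_{m-1})\boldsymbol\Omega\}}$, $m=1,\dots,q_n$; $d_n=\max\{m:\theta_{n,m}>0\}$. Assumption 1: $\|\boldsymbol\mu\|^2/n=O(1)$. Assumption 2: constants $0<c_1\le c_2<\infty$ with $c_1<\lambda_{\min}(\boldsymbol\Omega)\le\lambda_{\max}(\boldsymbol\Omega)<c_2$. Assumption 3: for each large $n$, $\theta_{n,1}\ge\cdots\ge\theta_{n,q_n}$. Assumption 4: a constant $V\ge1$ with $\max_{1\le m\le d_n}(\nu_m-\nu_{m-1})\le V$ for all large $n$. Assumption 5: for every fixed positive integer $m$ there are $\bar\theta_m>0$, $K_m>0$ such that for all $n\ge K_m$, $m\le d_n$ and $\theta_{n,m}\ge\bar\theta_m$. Assumption 6: for each large $n$ there is $m_n'\in\{1,\dots,d_n-1\}$ with $R_n(m)<R_n(m-1)$ for $2\le m\le m_n'$, $R_n(m)\ge R_n(m-1)$ for $m_n'<m\le d_n$, and $R_n(d_n)>R_n(d_n-1)$. *)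

From HB Require Import structures.
From mathcomp Require Import all_boot all_order all_algebra.
From mathcomp Require Import all_classical all_reals topology normedtype sequences.
Set Implicit Arguments. Unset Strict Implicit. Unset Printing Implicit Defensive.
Import Order.TTheory GRing.Theory Num.Theory.
Local Open Scope ring_scope.

Section Defs.
Variable R : realType.

Definition firstcols (n p k : nat) (X : 'M[R]_(n, p)) : 'M[R]_(n, k) :=
  \matrix_(i, j) oapp (X i) 0 (insub (val j) : option 'I_p).

(* hat matrix A (A^T A)^{-1} A^T ; for k = 0 this is the zero matrix. *)
Definition projmx (n k : nat) (A : 'M[R]_(n, k)) : 'M[R]_n :=
  A *m invmx (A^T *m A) *m A^T.

Definition Pm (n p : nat) (X : 'M[R]_(n, p)) (nu : nat -> nat) (m : nat) : 'M[R]_n :=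
  projmx (firstcols (nu m) X).

Definition sqnorm (n : nat) (v : 'cV[R]_n) : R := \sum_i (v i 0) ^+ 2.

(* E || A y - mu ||^2  for y = mu + eps, E eps = 0, Cov eps = Om *)
Definition riskA (n : nat) (mu : 'cV[R]_n) (Om A : 'M[R]_n) : R :=
  sqnorm (A *m mu - mu) + \tr (A *m Om *m A^T).

Definition Rmod (n p : nat) (X : 'M[R]_(n, p)) (beta : 'cV[R]_p) (Om : 'M[R]_n)
  (nu : nat -> nat) (m : nat) : R :=
  riskA (X *m beta) Om (Pm X nu m).

(* weight vector w : 'I_M -> R ; component i is the weight of model i.+1 *)
Definition wmx (n M : nat) (P : nat -> 'M[R]_n) (w : 'I_M -> R) : 'M[R]_n :=
  \sum_(i < M) w i *: P i.+1.

Definition Rwt (n p : nat) (X : 'M[R]_(n, p)) (beta : 'cV[R]_p) (Om : 'M[R]_n)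
  (nu : nat -> nat) (M : nat) (w : 'I_M -> R) : R :=
  riskA (X *m beta) Om (wmx (Pm X nu) w).

Definition inW (M : nat) (w : 'I_M -> R) : Prop :=
  (forall i, 0 <= w i <= 1) /\ \sum_i w i = 1.

Definition theta (n p : nat) (X : 'M[R]_(n, p)) (beta : 'cV[R]_p) (Om : 'M[R]_n)
  (nu : nat -> nat) (m : nat) : R :=
  let D := Pm X nu m - Pm X nu m.-1 in
  let mu := X *m beta in
  (n%:R^-1 * (mu^T *m D *m mu) 0 0) / \tr (D *m Om).

(* d_n = max { m in 1..q : theta_{n,m} > 0 }  (0 if the set is empty) *)
Local Open Scope nat_scope.
Definition dn (q : nat) (th : nat -> R) : nat :=
  \max_(1 <= m < q.+1 | (0 < th m)%R) m.
Local Close Scope ring_scope.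

End Defs.

From HB Require Import structures.
From mathcomp Require Import all_boot all_order all_algebra.
From mathcomp Require Import all_classical all_reals topology normedtype sequences.
From mathcomp Require Import complex spectral sesquilinear.
From mathcomp Require Import ring lra zify.
Import Order.TTheory GRing.Theory Num.Theory numFieldTopology.Exports numFieldNormedType.Exports.
Set Implicit Arguments. Unset Strict Implicit. Unset Printing Implicit Defensive.
Local Open Scope ring_scope.

(* Choosing the simplex vertex at m*_n gives R_n(w*_n) <= R_n(m*_n).  Conversely,
   every P_m with m <= M_n has range inside that of P_{M_n}, hence so does the
   averaged hat matrix P_w; by Pythagoras its bias is at least that of P_{M_n},
   and its variance is nonnegative, so
     R_n(m*_n) - R_n(w*_n) <= R_n(M_n) - R_n(w*_n) <= tr(P_{M_n} Om) <= c2 nu_{M_n}.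
   Meanwhile R_n(m*_n) >= R_n(m**_n) >= c1 nu_{m**_n} >= c1 m**_n.
   Beyond d_n all theta's are <= 0, so the risk strictly increases there and
   M_n < m**_n <= d_n eventually; Assumption 4 then gives nu_{M_n} <= V M_n, and
     1 - (c2 V / c1) (M_n / m**_n) <= R_n(w*_n) / R_n(m*_n) <= 1,
   which Condition M1 squeezes to 1.  The eigenvalue bounds on Om become the
   Rayleigh bounds c1 |u|^2 <= u Om u^T <= c2 |u|^2 through the spectral theorem
   for the (Hermitian) complexification of Om. *)

Section SpectralQuadraticForm.
Variable C : numClosedFieldType.
Local Open Scope sesquilinear_scope.

Lemma quad_diag_mx n (z : 'rV[C]_n) (d : 'rV[C]_n) :
  (z *m diag_mx d *m z^t*) 0 0 = \sum_j d 0 j * `|z 0 j| ^+ 2.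
Proof.
rewrite mxE; apply: eq_bigr => j _.
by rewrite mul_mx_diag !mxE normCK mulrCA mulrA.
Qed.

Lemma quad_conj_unitary n (P B : 'M[C]_n) (u : 'rV[C]_n) :
  u *m (P^t* *m B *m P) *m u^t* = (u *m P^t*) *m B *m (u *m P^t*)^t*.
Proof. by rewrite trmx_mul map_mxM trmxCK !mulmxA. Qed.

Lemma spectral_diag_eigenvalue n (A : 'M[C]_n) (j : 'I_n) :
  A \is normalmx -> eigenvalue A (spectral_diag A 0 j).
Proof.
move=> /orthomx_spectralP AE; set P := spectralmx A.
have Pu : P \in unitmx := spectral_unit A.
apply/eigenvalueP; exists (row j P).
  rewrite [in LHS]AE rowE !mulmxA mulmxK // scalemxAl; congr (_ *m _).
  apply/matrixP => i k; rewrite mul_mx_diag !mxE (ord1 i) eqxx mulrC.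
  by case: eqP => [->|]; rewrite ?mulr0.
apply: contraTneq isT => Pj0.
have := mulmxK Pu (delta_mx 0 j : 'rV_n).
rewrite -rowE Pj0 mul0mx => /matrixP /(_ 0 j).
by rewrite !mxE !eqxx => /eqP; rewrite eq_sym oner_eq0.
Qed.

End SpectralQuadraticForm.

Lemma eigenvalueN (F : fieldType) n (S : 'M[F]_n) a :
  eigenvalue (- S) a = eigenvalue S (- a).
Proof.
apply/eigenvalueP/eigenvalueP => -[v vS v0]; exists v => //.
  by rewrite -[v *m S]opprK -mulmxN vS scaleNr.
by rewrite mulmxN vS scaleNr opprK.
Qed.

Section RealSymmetric.
Variable R : rcfType.
Local Notation toC := (real_complex R).
Local Open Scope sesquilinear_scope.

Lemma real_complex_trC m k (B : 'M[R]_(m, k)) : (map_mx toC B)^t* = map_mx toC B^T.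
Proof. by apply/matrixP => i j; rewrite !mxE; exact: conjc_real. Qed.

Lemma symmx_quad_ge n (S : 'M[R]_n) (c : R) : S^T = S ->
  (forall a, eigenvalue S a -> c <= a) ->
  forall u : 'rV[R]_n, c * (u *m u^T) 0 0 <= (u *m S *m u^T) 0 0.
Proof.
move=> Ssym Sge u; set A := map_mx toC S.
set P := spectralmx A; set d := spectral_diag A.
have Aherm : A \is hermsymmx.
  by apply/is_hermitianmxP; rewrite expr0 scale1r real_complex_trC Ssym.
have Anormal := hermitian_normalmx Aherm.
have Punitary : P \is unitarymx := spectral_unitarymx A.
have AE : A = P^t* *m diag_mx d *m P.
  by rewrite -invmx_unitary //; apply/orthomx_spectralP.
have d_ge j : toC c <= d 0 j.
  have /mxOverP /(_ 0 j) /complex_realP [r dr] := hermitian_spectral_diag_real Aherm.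
  have := spectral_diag_eigenvalue j Anormal; rewrite -/d dr eigenvalue_map => /Sge.
  by rewrite lecR.
(* With A = P^* D P both quadratic forms become sums over the |z_j|^2, z = u P^*,
   weighted by the eigenvalues D_jj >= c and by 1 respectively. *)
set z := map_mx toC u *m P^t*.
have entryE (B : 'M[R]_1) : toC (B 0 0) = (map_mx toC B) 0 0 by rewrite mxE.
have quadS : toC ((u *m S *m u^T) 0 0) = \sum_j d 0 j * `|z 0 j| ^+ 2.
  rewrite entryE !map_mxM -real_complex_trC -/A.
  by rewrite AE quad_conj_unitary quad_diag_mx.
have quad1 : toC ((u *m u^T) 0 0) = \sum_j `|z 0 j| ^+ 2.
  rewrite entryE map_mxM -real_complex_trC.
  have -> : map_mx toC u = z *m P by rewrite mulmxKtV.
  rewrite trmx_mul map_mxM mulmxA mulmxtVK //.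
  rewrite -[z in z *m _]mulmx1 -diag_const_mx quad_diag_mx.
  by under eq_bigr do rewrite mxE mul1r.
rewrite -lecR rmorphM /= quadS quad1 mulr_sumr; apply: ler_sum => j _.
by rewrite ler_wpM2r ?exprn_ge0.
Qed.

Lemma symmx_quad_le n (S : 'M[R]_n) (c : R) : S^T = S ->
  (forall a, eigenvalue S a -> a <= c) ->
  forall u : 'rV[R]_n, (u *m S *m u^T) 0 0 <= c * (u *m u^T) 0 0.
Proof.
move=> Ssym Sle u; rewrite -lerN2 -mulNr.
have NSsym : (- S)^T = - S by rewrite linearN /= Ssym.
have NSge a : eigenvalue (- S) a -> - c <= a.
  by rewrite eigenvalueN => /Sle; rewrite lerNl.
have := symmx_quad_ge NSsym NSge u.
by rewrite mulmxN (mulNmx (u *m S)) [in X in _ <= X -> _]mxE.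
Qed.

End RealSymmetric.

Section Projection.
Variable R : realType.

Lemma mxtrace_mul_tr_ge0 m n (B : 'M[R]_(m, n)) : 0 <= \tr (B *m B^T).
Proof.
apply: sumr_ge0 => i _; rewrite mxE; apply: sumr_ge0 => j _.
by rewrite mxE -expr2 sqr_ge0.
Qed.

Lemma mulmx_tr_eq0 m n (B : 'M[R]_(m, n)) : B *m B^T = 0 -> B = 0.
Proof.
move=> /matrixP BBt0; apply/matrixP => i j; rewrite mxE.
have /eqP := BBt0 i i; rewrite !mxE psumr_eq0 => [/allP /(_ j) |k _].
  by rewrite mem_index_enum mxE -expr2 sqrf_eq0 => /(_ isT) /eqP.
by rewrite mxE -expr2 sqr_ge0.
Qed.

Lemma gram_unitmx n k (A : 'M[R]_(n, k)) : \rank A = k -> A^T *m A \in unitmx.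
Proof.
move=> rkA; rewrite -row_free_unit -kermx_eq0; set K := kermx _.
have : (K *m A^T) *m (K *m A^T)^T = 0.
  by rewrite trmx_mul trmxK mulmxA -(mulmxA K) mulmx_ker mul0mx.
by move/mulmx_tr_eq0/eqP; rewrite mulmx_free_eq0 // /row_free mxrank_tr rkA.
Qed.

Lemma projmx_sym n k (A : 'M[R]_(n, k)) : (projmx A)^T = projmx A.
Proof. by rewrite /projmx !trmx_mul trmxK trmx_inv trmx_mul trmxK mulmxA. Qed.

Lemma projmx_mulmx n k (A : 'M[R]_(n, k)) : \rank A = k -> projmx A *m A = A.
Proof. by move=> rkA; rewrite /projmx -!mulmxA mulVmx ?mulmx1 ?gram_unitmx. Qed.

Lemma projmx_idem n k (A : 'M[R]_(n, k)) : \rank A = k ->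
  projmx A *m projmx A = projmx A.
Proof. by move=> rkA; rewrite {1}/projmx !mulmxA projmx_mulmx. Qed.

Lemma mxtrace_projmx n k (A : 'M[R]_(n, k)) : \rank A = k -> \tr (projmx A) = k%:R.
Proof.
move=> rkA; rewrite /projmx -mulmxA mxtrace_mulC -mulmxA.
by rewrite mulVmx ?mxtrace1 ?gram_unitmx.
Qed.

Lemma projmx_nested n k l (A : 'M[R]_(n, l)) (B : 'M[R]_(n, k)) (S : 'M[R]_(l, k)) :
  \rank A = l -> B = A *m S ->
  projmx A *m projmx B = projmx B /\ projmx B *m projmx A = projmx B.
Proof.
move=> rkA BE.
have AB : projmx A *m projmx B = projmx B.
  by rewrite {1}/projmx !mulmxA {1}BE mulmxA projmx_mulmx // -BE.
split=> //.
by rewrite -[in LHS]projmx_sym -[projmx A]projmx_sym -(trmx_mul (projmx A)) AB projmx_sym.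
Qed.

Lemma firstcols_mulmx n p k l (X : 'M[R]_(n, p)) : (k <= l)%N ->
  firstcols k X = firstcols l X *m \matrix_(i < l, j < k) (i == j :> nat)%:R.
Proof.
move=> kl; apply/matrixP => r j; rewrite !mxE (bigD1 (widen_ord kl j)) //=.
rewrite big1 ?addr0 => [|i /eqP ij]; rewrite !mxE /= ?eqxx ?mulr1 //.
by case: eqP => [e|_]; [case: ij; apply/val_inj | rewrite mulr0].
Qed.

Lemma sqnormE n (v : 'cV[R]_n) : sqnorm v = (v^T *m v) 0 0.
Proof. by rewrite /sqnorm mxE; apply: eq_bigr => i _; rewrite !mxE expr2. Qed.

Lemma sqnorm_ge0 n (v : 'cV[R]_n) : 0 <= sqnorm v.
Proof. by apply: sumr_ge0 => i _; rewrite sqr_ge0. Qed.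

Section SymmetricIdempotent.
Variables (n : nat) (P : 'M[R]_n).
Hypotheses (P_sym : P^T = P) (P_idem : P *m P = P).

Lemma sqnorm_proj_sub_le (mu v : 'cV[R]_n) :
  P *m v = v -> sqnorm (P *m mu - mu) <= sqnorm (v - mu).
Proof.
move=> Pv; set a := v - P *m mu; set b := P *m mu - mu.
have ab : a^T *m b = 0.
  have -> : a = P *m (v - mu) by rewrite /a mulmxBr Pv.
  by rewrite trmx_mul P_sym -mulmxA /b mulmxBr mulmxA P_idem subrr mulmx0.
have ba : b^T *m a = 0 by rewrite -[b^T *m a]trmxK trmx_mul trmxK ab trmx0.
have -> : v - mu = a + b by rewrite /a /b addrA subrK.
rewrite !sqnormE [(a + b)^T]linearD /= mulmxDl (mulmxDr a^T a b) (mulmxDr b^T a b).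
rewrite ab ba addr0 add0r [in X in _ <= X]mxE.
by rewrite lerDr -sqnormE sqnorm_ge0.
Qed.

Lemma riskA_projE (mu : 'cV[R]_n) (Om : 'M[R]_n) :
  riskA mu Om P = (mu^T *m mu) 0 0 - (mu^T *m P *m mu) 0 0 + \tr (P *m Om).
Proof.
rewrite /riskA sqnormE; congr (_ + _); last first.
  by rewrite mxtrace_mulC mulmxA P_sym P_idem.
rewrite [(P *m mu - mu)^T]linearB /= trmx_mul P_sym mulmxBl !mulmxBr !mulmxA.
by rewrite -(mulmxA _ P P) P_idem subrr sub0r opprB !mxE.
Qed.

End SymmetricIdempotent.

Lemma mxtrace_quad_rows m n (A : 'M[R]_(m, n)) (B : 'M[R]_n) :
  \tr (A *m B *m A^T) = \sum_i (row i A *m B *m (row i A)^T) 0 0.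
Proof.
apply: eq_bigr => i _; rewrite !mxE; apply: eq_bigr => j _; rewrite !mxE.
by congr (_ * _); apply: eq_bigr => k _; rewrite !mxE.
Qed.

Lemma mxtrace_rayleigh n (Om : 'M[R]_n) (c1 c2 : R) : Om^T = Om ->
  (forall a, eigenvalue Om a -> c1 <= a <= c2) -> forall m (A : 'M[R]_(m, n)),
  c1 * \tr (A *m A^T) <= \tr (A *m Om *m A^T) <= c2 * \tr (A *m A^T).
Proof.
move=> Om_sym Om_eig m A.
have -> : A *m A^T = A *m 1%:M *m A^T by rewrite mulmx1.
rewrite !mxtrace_quad_rows !mulr_sumr; apply/andP; split; apply: ler_sum => i _.
  by rewrite mulmx1; apply: symmx_quad_ge => // a /Om_eig /andP[].
by rewrite mulmx1; apply: symmx_quad_le => // a /Om_eig /andP[].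
Qed.

End Projection.

Lemma dn_le (R : realType) q (th : nat -> R) : (dn q th <= q)%N.
Proof.
by apply/bigmax_leqP_seq => i; rewrite mem_index_iota ltnS => /andP[].
Qed.

Lemma dn_lt_le0 (R : realType) q (th : nat -> R) m :
  (dn q th < m <= q)%N -> th m <= 0.
Proof.
case/andP=> dm mq; rewrite leNgt; apply/negP => th_gt0.
have : (m <= dn q th)%N.
  apply: (leq_bigmax_seq (F := id)) => //.
  by rewrite mem_index_iota ltnS mq andbT (leq_ltn_trans _ dm).
by rewrite leqNgt dm.
Qed.

Lemma ratio_bounds (R : realFieldType) (L W A B v m b c1 c2 : R) :
  0 < c1 -> 0 <= c2 -> 0 < b -> b <= B -> 0 <= A -> A <= v * m ->
  c1 * B <= L -> L - W <= c2 * A -> W <= L ->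
  1 - (c2 * v / c1) * (m / b) <= W / L <= 1.
Proof.
move=> c1_gt0 c2_ge0 b_gt0 bB A_ge0 Avm BL LW WL.
set k := c2 * v / c1 * (m / b).
have c1b_le_L : c1 * b <= L by apply: le_trans BL; rewrite ler_pM2l.
have L_gt0 : 0 < L by apply: lt_le_trans c1b_le_L; rewrite mulr_gt0.
have kE : k * (c1 * b) = c2 * (v * m) by rewrite /k; field; rewrite !lt0r_neq0.
have k_ge0 : 0 <= k.
  by rewrite -(pmulr_lge0 _ (mulr_gt0 c1_gt0 b_gt0)) kE mulr_ge0 ?(le_trans A_ge0 Avm).
have gap : L - W <= k * L.
  apply: le_trans LW (le_trans (ler_wpM2l c2_ge0 Avm) _).
  by rewrite -kE ler_wpM2l.
by rewrite ler_pdivlMr // ler_pdivrMr // mul1r WL andbT mulrBl mul1r; lra.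
Qed.

Section FixedSampleSize.
Variable R : realType.
Variables (n p q M : nat) (nu : nat -> nat) (X : 'M[R]_(n, p)) (beta : 'cV[R]_p).
Variables (Om : 'M[R]_n) (c1 c2 : R).
Hypothesis p_lt_n : (p < n)%N.
Hypothesis M_le_q : (M <= q)%N.
Hypothesis nu0 : nu 0%N = 0%N.
Hypothesis nu_lt : forall m, (m < q)%N -> (nu m < nu m.+1)%N.
Hypothesis rank_X : forall m, (1 <= m <= q)%N -> \rank (firstcols (nu m) X) = nu m.
Hypothesis Om_sym : Om^T = Om.
Hypothesis c1_gt0 : 0 < c1.
Hypothesis Om_eig : forall a, eigenvalue Om a -> c1 <= a <= c2.

Local Notation mu := (X *m beta).
Local Notation P := (Pm X nu).
Local Notation Rn := (Rmod X beta Om nu).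
Local Notation Rw := (Rwt X beta Om nu).
Local Notation th := (theta X beta Om nu).

Lemma nu_mono k l : (k <= l)%N -> (l <= q)%N -> (nu k <= nu l)%N.
Proof.
move=> kl lq; elim: l kl lq => [|l IH]; first by rewrite leqn0 => /eqP ->.
rewrite leq_eqVlt => /orP[/eqP -> //|]; rewrite ltnS => kl lq.
exact: leq_trans (IH kl (ltnW lq)) (ltnW (nu_lt lq)).
Qed.

Lemma leq_nu m : (m <= q)%N -> (m <= nu m)%N.
Proof. by elim: m => // m IH mq; apply: leq_ltn_trans (IH (ltnW mq)) (nu_lt mq). Qed.

Lemma rank_firstcols m : (m <= q)%N -> \rank (firstcols (nu m) X) = nu m.
Proof.
case: m => [_|m mq]; last by rewrite rank_X.
by apply/eqP; rewrite eqn_leq rank_leq_col nu0.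
Qed.

Lemma Pm_sym m : (P m)^T = P m.
Proof. exact: projmx_sym. Qed.

Lemma Pm_idem m : (m <= q)%N -> P m *m P m = P m.
Proof. by move=> mq; rewrite projmx_idem ?rank_firstcols. Qed.

Lemma mxtrace_Pm m : (m <= q)%N -> \tr (P m) = (nu m)%:R.
Proof. by move=> mq; rewrite mxtrace_projmx ?rank_firstcols. Qed.

Lemma Pm_nested k l : (k <= l)%N -> (l <= q)%N ->
  P l *m P k = P k /\ P k *m P l = P k.
Proof.
move=> kl lq; apply: projmx_nested; first exact: rank_firstcols.
exact/firstcols_mulmx/nu_mono.
Qed.

Lemma RmodE m : (m <= q)%N ->
  Rn m = (mu^T *m mu) 0 0 - (mu^T *m P m *m mu) 0 0 + \tr (P m *m Om).
Proof. by move=> mq; rewrite /Rmod riskA_projE ?Pm_sym ?Pm_idem. Qed.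

Lemma mxtrace_Pm_Om_le m : (m <= q)%N ->
  \tr (P m *m Om *m (P m)^T) <= c2 * (nu m)%:R.
Proof.
move=> mq; have /andP[_] := mxtrace_rayleigh Om_sym Om_eig (P m).
by rewrite Pm_sym Pm_idem ?mxtrace_Pm.
Qed.

Lemma Rmod_ge m : (m <= q)%N -> c1 * (nu m)%:R <= Rn m.
Proof.
move=> mq; have /andP[+ _] := mxtrace_rayleigh Om_sym Om_eig (P m).
rewrite Pm_sym Pm_idem ?mxtrace_Pm // => /le_trans; apply.
by rewrite /Rmod /riskA Pm_sym lerDr sqnorm_ge0.
Qed.

Lemma Rmod_pred_lt m : (1 <= m <= q)%N -> th m <= 0 -> Rn m.-1 < Rn m.
Proof.
case/andP=> m_gt0 mq th_le0.
have m'q : (m.-1 <= q)%N by rewrite (leq_trans (leq_pred m)).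
have [PmP' P'Pm] := Pm_nested (leq_pred m) mq.
set D := P m - P m.-1.
have D_sym : D^T = D by rewrite linearB /= !Pm_sym.
have D_idem : D *m D = D.
  by rewrite mulmxBl !mulmxBr !Pm_idem // PmP' P'Pm subrr subr0.
have trD_gt0 : 0 < \tr D.
  by rewrite linearB /= !mxtrace_Pm // subr_gt0 ltr_nat -{2}(prednK m_gt0) nu_lt ?prednK.
have trDOm_gt0 : 0 < \tr (D *m Om).
  have /andP[+ _] := mxtrace_rayleigh Om_sym Om_eig D.
  rewrite D_sym D_idem mxtrace_mulC mulmxA D_idem mxtrace_mulC.
  by apply: lt_le_trans; rewrite mulr_gt0.
have muDmu_le0 : (mu^T *m D *m mu) 0 0 <= 0.
  move: th_le0; rewrite /theta -/D pmulr_lle0 ?invr_gt0 // pmulr_rle0 //.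
  by rewrite invr_gt0 ltr0n (leq_ltn_trans _ p_lt_n).
have trDOmE : \tr (D *m Om) = \tr (P m *m Om) - \tr (P m.-1 *m Om).
  by rewrite mulmxBl linearB.
have muDmuE : (mu^T *m D *m mu) 0 0
    = (mu^T *m P m *m mu) 0 0 - (mu^T *m P m.-1 *m mu) 0 0.
  by rewrite mulmxBr mulmxBl !mxE.
rewrite !RmodE //; lra.
Qed.

Section Minimisers.
Variables (mstar mstar2 : nat) (wstar : 'I_M -> R).
Hypothesis mstar_in : (1 <= mstar <= M)%N.
Hypothesis mstar_min : forall m, (1 <= m <= M)%N -> Rn mstar <= Rn m.
Hypothesis mstar2_in : (1 <= mstar2 <= q)%N.
Hypothesis mstar2_min : forall m, (1 <= m <= q)%N -> Rn mstar2 <= Rn m.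
Hypothesis wstar_min : forall w : 'I_M -> R, inW w -> Rw wstar <= Rw w.

Lemma Rwt_le_Rmod : Rw wstar <= Rn mstar.
Proof.
case/andP: mstar_in => ms_gt0 msM.
have jM : (mstar.-1 < M)%N by rewrite prednK.
pose e (i : 'I_M) : R := (i == Ordinal jM)%:R.
have eE : wmx P e = P mstar.
  rewrite /wmx /e (bigD1 (Ordinal jM)) //= eqxx scale1r big1 ?addr0 ?prednK //.
  by move=> i /negPf ->; rewrite scale0r.
have e_in : inW e.
  split=> [i|]; first by rewrite /e; case: eqP; rewrite /= ?lexx ?ler01.
  by rewrite /e (bigD1 (Ordinal jM)) //= eqxx big1 ?addr0 // => i /negPf ->.
by apply: le_trans (wstar_min e_in) _; rewrite /Rwt eE.
Qed.

Lemma Rmod_sub_Rwt_le : Rn mstar - Rw wstar <= c2 * (nu M)%:R.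
Proof.
set Pw := wmx P wstar.
have PM_Pw : P M *m Pw = Pw.
  rewrite /Pw /wmx mulmx_sumr; apply: eq_bigr => i _.
  by rewrite -scalemxAr (Pm_nested (ltn_ord i) M_le_q).1.
have bias_le : sqnorm (P M *m mu - mu) <= sqnorm (Pw *m mu - mu).
  by apply: sqnorm_proj_sub_le; rewrite ?Pm_sym ?Pm_idem // mulmxA PM_Pw.
have var_ge0 : 0 <= \tr (Pw *m Om *m Pw^T).
  have /andP[+ _] := mxtrace_rayleigh Om_sym Om_eig Pw.
  by apply: le_trans; rewrite mulr_ge0 ?mxtrace_mul_tr_ge0 ?ltW.
have RmsM : Rn mstar <= Rn M.
  by rewrite mstar_min // leqnn andbT; case/andP: mstar_in => /leq_trans; apply.
have := mxtrace_Pm_Om_le M_le_q; move: RmsM; rewrite /Rwt /Rmod /riskA -/Pw.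
lra.
Qed.

Lemma Rmod_mstar_ge : c1 * (nu mstar2)%:R <= Rn mstar.
Proof.
case/andP: mstar2_in => _ ms2q; apply: le_trans (Rmod_ge ms2q) _.
by apply: mstar2_min; case/andP: mstar_in => -> /leq_trans; apply.
Qed.

Lemma mstar2_le d : (1 <= d)%N ->
  (forall m, (d < m <= q)%N -> th m <= 0) -> (mstar2 <= d)%N.
Proof.
(* If d < m**_n then theta_{m**_n} <= 0, so R_n(m**_n - 1) < R_n(m**_n). *)
move=> d_gt0 th_le0; rewrite leqNgt; apply/negP => d_lt.
case/andP: mstar2_in => _ ms2q.
have ms2_gt1 : (1 < mstar2)%N := leq_ltn_trans d_gt0 d_lt.
have pred_in : (1 <= mstar2.-1 <= q)%N.
  by rewrite -ltnS prednK ?ms2_gt1 ?(leq_trans (leq_pred _)) // ltnW.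
by have := mstar2_min pred_in; rewrite leNgt Rmod_pred_lt // th_le0 // d_lt.
Qed.

Lemma nu_le_mul d (V : nat) : (d <= q)%N ->
  (forall m, (1 <= m <= d)%N -> (nu m - nu m.-1 <= V)%N) ->
  forall m, (m <= d)%N -> (nu m <= V * m)%N.
Proof.
move=> dq nuV; elim=> [|m IH md]; first by rewrite nu0.
have := nuV m.+1 md; have := nu_lt (leq_trans md dq); have := IH (ltnW md).
rewrite /=; lia.
Qed.

Lemma risk_ratio_bounds (V : nat) : 0 <= c2 ->
  let d := dn q th in (1 <= d)%N ->
  (forall m, (1 <= m <= d)%N -> (nu m - nu m.-1 <= V)%N) ->
  (M%:R / mstar2%:R : R) < 1 ->
  1 - (c2 * V%:R / c1) * (M%:R / mstar2%:R) <= Rw wstar / Rn mstar <= 1.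
Proof.
move=> c2_ge0 d d_gt0 nuV ratio_lt1.
have ms2_gt0 : (0 < mstar2%:R :> R) by rewrite ltr0n; case/andP: mstar2_in.
have M_lt : (M < mstar2)%N by move: ratio_lt1; rewrite ltr_pdivrMr // mul1r ltr_nat.
have ms2_le_d : (mstar2 <= d)%N.
  by apply: (mstar2_le d_gt0) => m; apply: dn_lt_le0.
apply: (@ratio_bounds _ _ _ (nu M)%:R (nu mstar2)%:R) => //.
- by rewrite ler_nat leq_nu //; case/andP: mstar2_in.
- by rewrite -natrM ler_nat (nu_le_mul (dn_le q th) nuV) // (leq_trans (ltnW M_lt)).
- exact: Rmod_mstar_ge.
- exact: Rmod_sub_Rwt_le.
- exact: Rwt_le_Rmod.
Qed.

End Minimisers.
End FixedSampleSize.

Local Open Scope classical_set_scope.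

Theorem theorem3 (R : realType) (p q M : nat -> nat) (nu : nat -> nat -> nat)
  (X : forall n : nat, 'M[R]_(n, p n)) (beta : forall n : nat, 'cV[R]_(p n))
  (Om : forall n : nat, 'M[R]_n)
  (mstar mstar2 : nat -> nat) (wstar : forall n : nat, 'I_(M n) -> R) :
  (* standing setting, for every (large) n *)
  (\forall n \near \oo,
     ((p n < n)%N /\ (2 <= M n)%N /\ (M n <= q n)%N /\
      nu n 0%N = 0%N /\ nu n (q n) = p n /\
      (forall m, (m < q n)%N -> (nu n m < nu n m.+1)%N) /\
      (forall m, (1 <= m <= q n)%N ->
         \rank (firstcols (nu n m) (X n)) = nu n m) /\
      (Om n)^T = Om n /\
      (forall x : 'cV[R]_n, x != 0 -> 0 < (x^T *m Om n *m x) 0 0))) ->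
  (* m*_n : unique minimiser of R_n(m) over {1,..,M_n} *)
  (\forall n \near \oo,
     [/\ (1 <= mstar n <= M n)%N,
         (forall m, (1 <= m <= M n)%N ->
            Rmod (X n) (beta n) (Om n) (nu n) (mstar n)
              <= Rmod (X n) (beta n) (Om n) (nu n) m) &
         (forall m, (1 <= m <= M n)%N ->
            Rmod (X n) (beta n) (Om n) (nu n) m
              = Rmod (X n) (beta n) (Om n) (nu n) (mstar n) -> m = mstar n)]) ->
  (* m**_n : unique minimiser of R_n(m) over {1,..,q_n} *)
  (\forall n \near \oo,
     [/\ (1 <= mstar2 n <= q n)%N,
         (forall m, (1 <= m <= q n)%N ->
            Rmod (X n) (beta n) (Om n) (nu n) (mstar2 n)
              <= Rmod (X n) (beta n) (Om n) (nu n) m) &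
         (forall m, (1 <= m <= q n)%N ->
            Rmod (X n) (beta n) (Om n) (nu n) m
              = Rmod (X n) (beta n) (Om n) (nu n) (mstar2 n) -> m = mstar2 n)]) ->
  (* w*_n : unique minimiser of R_n(w) over W_n *)
  (\forall n \near \oo,
     [/\ inW (wstar n),
         (forall w : 'I_(M n) -> R, inW w ->
            Rwt (X n) (beta n) (Om n) (nu n) (wstar n)
              <= Rwt (X n) (beta n) (Om n) (nu n) w) &
         (forall w : 'I_(M n) -> R, inW w ->
            Rwt (X n) (beta n) (Om n) (nu n) w
              = Rwt (X n) (beta n) (Om n) (nu n) (wstar n) -> w =1 wstar n)]) ->
  (* Assumption 1 *)
  (exists C : R, \forall n \near \oo,
     sqnorm (X n *m beta n) / n%:R <= C) ->
  (* Assumption 2 *)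
  (exists c1 c2 : R, 0 < c1 /\ c1 <= c2 /\
     forall n a, eigenvalue (Om n) a -> c1 < a < c2) ->
  (* Assumption 3 *)
  (\forall n \near \oo, forall m, (1 <= m)%N -> (m < q n)%N ->
     theta (X n) (beta n) (Om n) (nu n) m.+1
       <= theta (X n) (beta n) (Om n) (nu n) m) ->
  (* Assumption 4 *)
  (exists V : nat, (1 <= V)%N /\ \forall n \near \oo,
     forall m, (1 <= m <= dn (q n) (theta (X n) (beta n) (Om n) (nu n)))%N ->
       (nu n m - nu n m.-1 <= V)%N) ->
  (* Assumption 5 *)
  (forall m : nat, (1 <= m)%N -> exists (thb : R) (K : nat),
     0 < thb /\ (0 < K)%N /\
     forall n, (K <= n)%N ->
       (m <= dn (q n) (theta (X n) (beta n) (Om n) (nu n)))%N /\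
       thb <= theta (X n) (beta n) (Om n) (nu n) m) ->
  (* Assumption 6 *)
  (\forall n \near \oo,
     let d := dn (q n) (theta (X n) (beta n) (Om n) (nu n)) in
     let Rn := Rmod (X n) (beta n) (Om n) (nu n) in
     exists m' : nat, [/\ (1 <= m' <= d.-1)%N,
       (forall m, (2 <= m <= m')%N -> Rn m < Rn m.-1),
       (forall m, (m' < m <= d)%N -> Rn m.-1 <= Rn m) &
       Rn d.-1 < Rn d]) ->
  (* Condition M1 *)
  ((fun n => (M n)%:R / (mstar2 n)%:R : R) @ \oo --> (0 : R)) ->
  (* conclusion: R_n(w*_n) / R_n(m*_n) -> 1 *)
  ((fun n => Rwt (X n) (beta n) (Om n) (nu n) (wstar n)
             / Rmod (X n) (beta n) (Om n) (nu n) (mstar n)) @ \oo --> (1 : R)).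
Proof.
move=> Hset Hms Hms2 Hw _ [c1 [c2 [c1_gt0 [c12 Om_eig]]]] _ [V [_ HV]] A5 _ HM1.
have [thb [K [_ [_ HK]]]] := A5 1%N (leqnn 1).
have c2_ge0 : 0 <= c2 by rewrite (le_trans _ c12) ?ltW.
have Om_eig_le n a : eigenvalue (Om n) a -> c1 <= a <= c2.
  by move/Om_eig/andP => [/ltW -> /ltW ->].
set k := c2 * V%:R / c1.
apply: (@squeeze_cvgr _ _ _ _ (fun n => 1 - k * ((M n)%:R / (mstar2 n)%:R)) (fun=> 1)).
- near=> n.
  have /(_ _)[//|p_lt_n [_ [M_le_q [nu0 [_ [nu_lt [rank_X [Om_sym _]]]]]]]] := near Hset n.
  have /(_ _)[//|ms_in ms_min _] := near Hms n.
  have /(_ _)[//|ms2_in ms2_min _] := near Hms2 n.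
  have /(_ _)[//|_ w_min _] := near Hw n.
  have /(_ _)/wrap[//|nuV] := near HV n.
  have Kn : (K <= n)%N by near: n; exact: nbhs_infty_ge.
  have lt1 : ((M n)%:R / (mstar2 n)%:R : R) < 1 by near: n; exact: cvgr_lt HM1 _ ltr01.
  exact: (risk_ratio_bounds p_lt_n M_le_q nu0 nu_lt rank_X Om_sym c1_gt0 (Om_eig_le n)
    ms_in ms_min ms2_in ms2_min w_min c2_ge0 (HK n Kn).1 nuV lt1).
- rewrite -[X in _ --> X]subr0 -(mulr0 k).
  by apply: cvgB; [exact: cvg_cst | exact: cvgMl_tmp].
- exact: cvg_cst.
Unshelve. all: end_near.
Qed.
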